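(* Let $M$ be a $k$-connected matroid on $E$, where $k\geq 2$ and $|E|\geq \max\{3k-5,2\}$. Then $M$ has a unique tangle $\mathcal T$ of order $k$. Moreover a subset $A$ of $E$ belongs to $\mathcal T$ if and only if $|A|\leq k-2$.
   Context: For a matroid $M$ on $E$ with rank function $r$, $\lambda_M(X)=r(X)+r(E-X)-r(M)+1$. For a positive integer $l$, an $l$-separation (in Tutte's sense) is a partition $(X,Y)$ of $E$ with $|X|,|Y|\ge l$ and $\lambda_M(X)\le l$; $M$ is $k$-connected if it has no $l$-separation for any $l<k$. A tangle of order $k$ in $M$ is a collection $\mathcal T$ of subsets of $E$ such that (T1) $\lambda_M(A)<k$ for all $A\in\mathcal T$; (T2) if $\lambda_M(A)\le k-1$ then $A\in\mathcal T$ or $E-A\in\mathcal T$; (T3) $A\cup B\cup C\ne E$ for all $A,B,C\in\mathcal T$; (T4) $E-\{e\}\notin\mathcal T$ for each $e\in E$. *)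

From mathcomp Require Import all_boot.
Set Implicit Arguments. Unset Strict Implicit. Unset Printing Implicit Defensive.

Definition matroid_rank (E : finType) (r : {set E} -> nat) : Prop :=
  [/\ forall X : {set E}, r X <= #|X|,
      forall X Y : {set E}, X \subset Y -> r X <= r Y
    & forall X Y : {set E}, r (X :|: Y) + r (X :&: Y) <= r X + r Y].

(* connectivity function lambda_M(X) = r(X) + r(E-X) - r(M) + 1
   (no truncation occurs for a matroid rank function, by submodularity) *)
Definition lambdaM (E : finType) (r : {set E} -> nat) (X : {set E}) : nat :=
  r X + r (~: X) - r [set: E] + 1.

Definition l_separation (E : finType) (r : {set E} -> nat) (l : nat)
  (X : {set E}) : Prop :=
  l <= #|X| /\ l <= #|~: X| /\ lambdaM r X <= l.

Definition k_connected (E : finType) (r : {set E} -> nat) (k : nat) : Prop :=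
  forall l : nat, 0 < l -> l < k -> forall X : {set E}, ~ l_separation r l X.

Definition tangle (E : finType) (r : {set E} -> nat) (k : nat)
  (T : {set {set E}}) : Prop :=
  [/\ (forall A, A \in T -> lambdaM r A < k),
      (forall A, lambdaM r A <= k - 1 -> A \in T \/ ~: A \in T),
      (forall A B C, A \in T -> B \in T -> C \in T -> A :|: B :|: C != [set: E])
    & (forall e : E, [set~ e] \notin T)].

From mathcomp Require Import all_boot zify.
Set Implicit Arguments. Unset Strict Implicit. Unset Printing Implicit Defensive.

(* Every set A with |A| <= k - 2 lies in a tangle of order k: otherwise its
   complement does, and E is covered by E - A, A - e and {e}, the last two
   being in the tangle by induction and by (T2) + (T4).  Conversely a set of a
   tangle has lambda <= k - 1, so by k-connectivity it or its complement has at
   most k - 2 elements, and the complement cannot be in the tangle together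
   with the set.  Hence the only candidate is the family of small sets, which
   satisfies (T3) because 3 (k - 2) < 3k - 5 <= |E|. *)

Section Tangle.

Variables (E : finType) (r : {set E} -> nat) (k : nat).
Hypothesis hr : matroid_rank r.

Lemma lambdaM_le_card (A : {set E}) : lambdaM r A <= #|A| + 1.
Proof.
case: hr => r_le_card r_mono _; rewrite /lambdaM.
have := r_le_card A; have := r_mono (~: A) setT (subsetT _); lia.
Qed.

Variable T : {set {set E}}.
Hypothesis hT : tangle r k T.

Lemma tangle_setT_notin : setT \notin T.
Proof.
case: hT => _ _ T3 _; apply/negP => ET.
by have := T3 _ _ _ ET ET ET; rewrite !setUid eqxx.
Qed.

Lemma tangle_setC_notin (A : {set E}) : A \in T -> ~: A \notin T.
Proof.
case: hT => _ _ T3 _ AT; apply/negP => ACT.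
by have := T3 _ _ _ AT ACT ACT; rewrite setUCr setTU eqxx.
Qed.

Lemma tangle_in (A : {set E}) : lambdaM r A <= k - 1 -> ~: A \notin T -> A \in T.
Proof. by case: hT => _ T2 _ _ /T2 [// | ->]. Qed.

Lemma tangle_set1 (e : E) : 3 <= k -> [set e] \in T.
Proof.
move=> k_ge3; case: (hT) => _ _ _ T4; apply: tangle_in; last exact: T4.
by have := lambdaM_le_card [set e]; rewrite cards1; lia.
Qed.

Lemma tangle_small (A : {set E}) : 2 <= k -> #|A| <= k - 2 -> A \in T.
Proof.
move=> k_ge2; move: {2}#|A| (erefl #|A|) => n; elim: n A => [|n IH] A cardA smallA.
  have -> : A = set0 by apply/eqP; rewrite -cards_eq0 cardA.
  apply: tangle_in; first by have := lambdaM_le_card set0; rewrite cards0; lia.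
  by rewrite setC0 tangle_setT_notin.
have [e eA] : exists e, e \in A by apply/set0Pn; rewrite -card_gt0 cardA.
have cardAe : #|A :\ e| = n by move: (cardsD1 e A); rewrite eA cardA; lia.
have AeT := IH _ cardAe ltac:(lia).
have eT := tangle_set1 e ltac:(lia).
apply: tangle_in; first by have := lambdaM_le_card A; lia.
apply/negP => ACT; case: hT => _ _ T3 _.
have := T3 _ _ _ ACT AeT eT.
suff -> : ~: A :|: A :\ e :|: [set e] = setT by rewrite eqxx.
apply/setP => x; rewrite !inE.
by case: (x \in A); case: (x == e).
Qed.

End Tangle.

Section Connected.

Variables (E : finType) (r : {set E} -> nat) (k : nat).
Hypotheses (hr : matroid_rank r) (k_ge2 : 2 <= k) (hc : k_connected r k).

Definition small_sets : {set {set E}} := [set A : {set E} | #|A| <= k - 2].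

Lemma k_connected_small_side (A : {set E}) :
  lambdaM r A <= k - 1 -> #|A| <= k - 2 \/ #|~: A| <= k - 2.
Proof.
move=> lamA; case: (leqP #|A| (k - 2)) => [| bigA]; first by left.
case: (leqP #|~: A| (k - 2)) => [| bigAC]; first by right.
by case: (@hc (k - 1) ltac:(lia) ltac:(lia) A); split; lia.
Qed.

Lemma small_sets_tangle : maxn (3 * k - 5) 2 <= #|E| -> tangle r k small_sets.
Proof.
rewrite geq_max => /andP [cardE1 cardE2]; split.
- by move=> A; rewrite inE => smallA; have := lambdaM_le_card hr A; lia.
- by move=> A /k_connected_small_side; rewrite !inE.
- move=> A B C; rewrite !inE => smallA smallB smallC; apply/eqP => ABC.
  have := leq_of_leqif (leq_card_setU (A :|: B) C).
  have := leq_of_leqif (leq_card_setU A B).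
  by rewrite ABC cardsT; lia.
- by move=> e; rewrite inE cardsC1; lia.
Qed.

Lemma tangle_eq_small_sets (T : {set {set E}}) : tangle r k T -> T = small_sets.
Proof.
move=> hT; apply/setP => A; rewrite inE.
case: (leqP #|A| (k - 2)) => [smallA | bigA].
  by rewrite (tangle_small hr hT).
apply/negP => AT.
have lamA : lambdaM r A <= k - 1 by case: hT => T1 _ _ _; have := T1 A AT; lia.
have [|smallAC] := k_connected_small_side lamA; first lia.
by move: (tangle_setC_notin hT AT); rewrite (tangle_small hr hT).
Qed.

End Connected.

Theorem corollary2p4 (E : finType) (r : {set E} -> nat) (k : nat) :
  matroid_rank r -> 2 <= k -> maxn (3 * k - 5) 2 <= #|E| -> k_connected r k ->
  exists T : {set {set E}},
    [/\ tangle r k T,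
        (forall T' : {set {set E}}, tangle r k T' -> T' = T)
      & (forall A : {set E}, A \in T <-> #|A| <= k - 2)].
Proof.
move=> hr k_ge2 cardE hc; exists (small_sets E k); split.
- exact: small_sets_tangle.
- by move=> T'; apply: tangle_eq_small_sets.
- by move=> A; rewrite inE.
Qed.
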